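(* For partitions $\lambda,\mu$ with at most $n$ parts such that $\mu\not\subseteq\lambda$, and $x\in\mathbb{C}$, we have $\omega_{\lambda/\mu}(x;r;a,b)=0$.
   Context: Fix $|p|<1$; parameters generic. $E(x)=(x;p)_\infty(p/x;p)_\infty$. For integer $m\ge0$, $(a)_m=\prod_{k=0}^{m-1}E(aq^k)$, for $m<0$, $(a)_m=1/(aq^m)_{-m}$; for a partition $\lambda$ with $n$ parts $(a)_\lambda=\prod_{i=1}^n(at^{1-i})_{\lambda_i}$; several arguments denote products; integer subscripts denote the single-integer symbol. $q^\lambda t^{\delta(n)}=(q^{\lambda_1}t^{n-1},\dots,q^{\lambda_n})$. $W$ functions: for $n$-part partitions with $\lambda_1\ge\mu_1\ge\dots\ge\lambda_n\ge\mu_n$, $\lambda_{n+1}=\mu_{n+1}=0$, $H_{\lambda/\mu}(q,p,t,b)=\prod_{1\le i<j\le n}\Big\{\frac{(q^{\mu_i-\mu_{j-1}}t^{j-i})_{\mu_{j-1}-\lambda_j}(q^{\lambda_i+\lambda_j}t^{3-j-i}b)_{\mu_{j-1}-\lambda_j}}{(q^{\mu_i-\mu_{j-1}+1}t^{j-i-1})_{\mu_{j-1}-\lambda_j}(q^{\lambda_i+\lambda_j+1}t^{2-j-i}b)_{\mu_{j-1}-\lambda_j}}\frac{(q^{\lambda_i-\mu_{j-1}+1}t^{j-i-1})_{\mu_{j-1}-\lambda_j}}{(q^{\lambda_i-\mu_{j-1}}t^{j-i})_{\mu_{j-1}-\lambda_j}}\Big\}\prod_{1\le i<j-1\le n}\frac{(q^{\mu_i+\lambda_j+1}t^{1-j-i}b)_{\mu_{j-1}-\lambda_j}}{(q^{\mu_i+\lambda_j}t^{2-j-i}b)_{\mu_{j-1}-\lambda_j}}$;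 for $x\in\mathbb{C}$, $W_{\lambda/\mu}(x;q,p,t,a,b)=H_{\lambda/\mu}\frac{(x^{-1},ax)_\lambda(qbx/t,qb/(axt))_\mu}{(x^{-1},ax)_\mu(qbx,qb/(ax))_\lambda}\prod_{i=1}^n\frac{E(bt^{1-2i}q^{2\mu_i})}{E(bt^{1-2i})}\frac{(bt^{1-2i})_{\mu_i+\lambda_{i+1}}}{(bqt^{-2i})_{\mu_i+\lambda_{i+1}}}t^{i(\mu_i-\lambda_{i+1})}$ (zero if the interlacing fails); recursively $W_{\lambda/\mu}(y,z_1,\dots,z_\ell;q,p,t,a,b)=\sum_\nu W_{\lambda/\nu}(yt^{-\ell};q,p,t,at^{2\ell},bt^\ell)W_{\nu/\mu}(z_1,\dots,z_\ell;q,p,t,a,b)$ over $\nu$ with $\lambda_1\ge\nu_1\ge\dots\ge\lambda_n\ge\nu_n\ge0$; $W_\lambda=W_{\lambda/0}$. For $x\in\mathbb{C}$ (suppressing $q,p,t$): $\omega_{\lambda/\mu}(x;r;a,b)=\frac{(x^{-1},ax)_\lambda}{(qbx,qb/(ax))_\lambda}\frac{(qbr^{-1}x,qb/(axr))_\mu}{(x^{-1},ax)_\mu}\frac{(r,br^{-1}t^{1-n})_\mu}{(qbr^{-2},qt^{n-1})_\mu}\prod_{i=1}^n\frac{E(br^{-1}t^{2-2i}q^{2\mu_i})}{E(br^{-1}t^{2-2i})}(qt^{2i-2})^{\mu_i}\prod_{1\le i<j\le n}\frac{(qt^{j-i})_{\mu_i-\mu_j}(br^{-1}t^{3-i-j})_{\mu_i+\mu_j}}{(qt^{j-i-1})_{\mu_i-\mu_j}(br^{-1}t^{2-i-j})_{\mu_i+\mu_j}}\,W_\mu(q^\lambda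 t^{\delta(n)};q,p,t,bt^{2-2n},br^{-1}t^{1-n})$. *)

(* Complex numbers are R[i] = complex R
   for an arbitrary R : realType (e.g. Stdlib's R); infinite products are
   limits of partial products in the normed field (R[i])^o. *)
From mathcomp Require Import all_boot all_order all_algebra.
From mathcomp Require Import all_classical all_reals all_analysis.
From mathcomp Require Export complex.
Set Implicit Arguments. Unset Strict Implicit. Unset Printing Implicit Defensive.
Import Order.TTheory GRing.Theory Num.Theory.
Import numFieldNormedType.Exports.
Local Open Scope classical_set_scope.
Local Open Scope ring_scope.
Local Open Scope complex_scope.

Definition qpinf {R : realType} (x p : R[i]) : R[i] :=
  limn (fun N : nat => (\prod_(k < N) (1 - x * p ^+ k) : (R[i])^o)).

Definition Eth {R : realType} (p x : R[i]) : R[i] := qpinf x p * qpinf (p / x) p.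

(* (a)_m for m : int :  prod_{k<m} E(a q^k) if m >= 0,
   1/(a q^m)_{-m} if m < 0  (Negz k = -(k+1)). *)
Definition sf {R : realType} (p q a : R[i]) (m : int) : R[i] :=
  match m with
  | Posz k => \prod_(j < k) Eth p (a * q ^+ j)
  | Negz k => (\prod_(j < k.+1) Eth p (a * q ^ m * q ^+ j))^-1
  end.

(* partitions with (at most) n parts are represented 1-based as functions
   nat -> nat: lam i = lambda_i for 1 <= i <= n, and lam i = 0 for i > n. *)
Definition is_partition (n : nat) (lam : nat -> nat) : Prop :=
  (forall i, (1 <= i < n)%N -> (lam i.+1 <= lam i)%N) /\
  (forall i, (n < i)%N -> lam i = 0%N).

(* truncation enforcing lambda_{n+1} = 0 *)
Definition ext (n : nat) (lam : nat -> nat) : nat -> nat :=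
  fun i => if (i <= n)%N then lam i else 0%N.

Definition pf {R : realType} (n : nat) (p q t a : R[i]) (lam : nat -> nat) : R[i] :=
  \prod_(1 <= i < n.+1) sf p q (a * t ^ (1 - (i%:Z))) (lam i)%:Z.

Definition interl (n : nat) (lam mu : nat -> nat) : bool :=
  [forall i : 'I_n, (mu i.+1 <= lam i.+1)%N && (lam i.+2 <= mu i.+1)%N].

Definition Hfac {R : realType} (n : nat) (p q t b : R[i]) (lam mu : nat -> nat) : R[i] :=
  (\prod_(1 <= i < n.+1) \prod_(i.+1 <= j < n.+1)
     (let m := (mu j.-1)%:Z - (lam j)%:Z in
      (sf p q (q ^ ((mu i)%:Z - (mu j.-1)%:Z) * t ^ (j%:Z - i%:Z)) m
       * sf p q (q ^ ((lam i)%:Z + (lam j)%:Z) * t ^ (3 - j%:Z - i%:Z) * b) m)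
      / (sf p q (q ^ ((mu i)%:Z - (mu j.-1)%:Z + 1) * t ^ (j%:Z - i%:Z - 1)) m
         * sf p q (q ^ ((lam i)%:Z + (lam j)%:Z + 1) * t ^ (2 - j%:Z - i%:Z) * b) m)
      * (sf p q (q ^ ((lam i)%:Z - (mu j.-1)%:Z + 1) * t ^ (j%:Z - i%:Z - 1)) m
         / sf p q (q ^ ((lam i)%:Z - (mu j.-1)%:Z) * t ^ (j%:Z - i%:Z)) m)))
  * (\prod_(1 <= i < n.+1) \prod_(i.+2 <= j < n.+2)
     (let m := (mu j.-1)%:Z - (lam j)%:Z in
      sf p q (q ^ ((mu i)%:Z + (lam j)%:Z + 1) * t ^ (1 - j%:Z - i%:Z) * b) m
      / sf p q (q ^ ((mu i)%:Z + (lam j)%:Z) * t ^ (2 - j%:Z - i%:Z) * b) m)).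

Definition W1 {R : realType} (n : nat) (p q t a b x : R[i]) (lam0 mu0 : nat -> nat) : R[i] :=
  let lam := ext n lam0 in let mu := ext n mu0 in
  if interl n lam mu then
    Hfac n p q t b lam mu
    * ((pf n p q t x^-1 lam * pf n p q t (a * x) lam
        * pf n p q t (q * b * x / t) mu * pf n p q t (q * b / (a * x * t)) mu)
       / (pf n p q t x^-1 mu * pf n p q t (a * x) mu
          * pf n p q t (q * b * x) lam * pf n p q t (q * b / (a * x)) lam))
    * \prod_(1 <= i < n.+1)
        (Eth p (b * t ^ (1 - 2 * i%:Z) * q ^+ (2 * mu i)) / Eth p (b * t ^ (1 - 2 * i%:Z))
         * (sf p q (b * t ^ (1 - 2 * i%:Z)) (mu i + lam i.+1)%N%:Z
            / sf p q (b * q * t ^ (- (2 * i%:Z))) (mu i + lam i.+1)%N%:Z)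
         * t ^ (i%:Z * ((mu i)%:Z - (lam i.+1)%:Z)))
  else 0.

Definition nu_of (n M : nat) (f : {ffun 'I_n -> 'I_M}) : nat -> nat :=
  fun i => if i == 0%N then 0%N else nth 0%N [seq nat_of_ord (f j) | j <- enum 'I_n] i.-1.

(* W_{lam/mu}(z_1,...,z_k; q,p,t,a,b), recursively:
   W_{lam/mu}(y,z_1..z_l; a,b) =
     sum_{nu} W_{lam/nu}(y t^{-l}; a t^{2l}, b t^l) W_{nu/mu}(z_1..z_l; a,b),
   nu ranging over partitions with lam_1>=nu_1>=lam_2>=...>=lam_n>=nu_n>=0
   (enumerated as functions 'I_n -> 'I_(lam_1 + 1)). *)
Fixpoint Wv {R : realType} (n : nat) (p q t a b : R[i]) (zs : seq R[i])
    (lam mu : nat -> nat) {struct zs} : R[i] :=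
  match zs with
  | [::] => 0
  | y :: zs' =>
    if zs' is [::] then W1 n p q t a b y lam mu
    else
      \sum_(f : {ffun 'I_n -> 'I_(ext n lam 1).+1} | interl n (ext n lam) (nu_of f))
        W1 n p q t (a * t ^+ (2 * size zs')) (b * t ^+ size zs') (y * t ^- size zs')
           lam (nu_of f)
        * Wv n p q t a b zs' (nu_of f) mu
  end.

Definition qlam_tdelta {R : realType} (n : nat) (q t : R[i]) (lam : nat -> nat) : seq R[i] :=
  [seq q ^+ lam i * t ^+ (n - i) | i <- iota 1 n].

Definition zero_part : nat -> nat := fun _ => 0%N.

Definition omega {R : realType} (n : nat) (p q t x r a b : R[i]) (lam mu : nat -> nat) : R[i] :=
  (pf n p q t x^-1 lam * pf n p q t (a * x) lam)
    / (pf n p q t (q * b * x) lam * pf n p q t (q * b / (a * x)) lam)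
  * (pf n p q t (q * b / r * x) mu * pf n p q t (q * b / (a * x * r)) mu)
    / (pf n p q t x^-1 mu * pf n p q t (a * x) mu)
  * (pf n p q t r mu * pf n p q t (b / r * t ^ (1 - n%:Z)) mu)
    / (pf n p q t (q * b / r ^+ 2) mu * pf n p q t (q * t ^+ n.-1) mu)
  * \prod_(1 <= i < n.+1)
      (Eth p (b / r * t ^ (2 - 2 * i%:Z) * q ^+ (2 * mu i)) / Eth p (b / r * t ^ (2 - 2 * i%:Z))
       * (q * t ^ (2 * i%:Z - 2)) ^+ mu i)
  * \prod_(1 <= i < n.+1) \prod_(i.+1 <= j < n.+1)
      ((sf p q (q * t ^ (j%:Z - i%:Z)) ((mu i)%:Z - (mu j)%:Z)
        * sf p q (b / r * t ^ (3 - i%:Z - j%:Z)) (mu i + mu j)%N%:Z)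
       / (sf p q (q * t ^ (j%:Z - i%:Z - 1)) ((mu i)%:Z - (mu j)%:Z)
          * sf p q (b / r * t ^ (2 - i%:Z - j%:Z)) (mu i + mu j)%N%:Z))
  * Wv n p q t (b * t ^ (2 - 2 * n%:Z)) (b / r * t ^ (1 - n%:Z))
       (qlam_tdelta n q t lam) mu zero_part.

From mathcomp Require Import all_boot all_order all_algebra.
From mathcomp Require Import all_classical all_reals all_analysis.
From mathcomp Require Import complex.
From mathcomp Require Import zify.
Set Implicit Arguments. Unset Strict Implicit. Unset Printing Implicit Defensive.
Import Order.TTheory GRing.Theory Num.Theory.
Local Open Scope ring_scope.
Local Open Scope complex_scope.

(* Since (1;p)_oo contains the factor 1 - 1, E(1) = 0, so (a)_m vanishes as
   soon as a q^k = 1 for some k < m.  Evaluate W_mu(q^lam t^delta(n)) by the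
   branching rule, peeling off the variables q^{lam_1} t^{n-1}, q^{lam_2} t^{n-2}, ...
   one at a time.  At the s-th step the outer partition nu is evaluated at
   y t^{-(n-s)} = q^{lam_s}, and the factor (y^{-1})_nu contains (q^{-lam_s})_{nu_1},
   which vanishes when lam_s < nu_1.  If instead lam_{s+i} < nu_{i+1} with i > 0,
   interlacing gives nu'_i >= nu_{i+1} > lam_{s+i} for every intermediate nu', so
   the violation is passed on to the next step.  A violation lam_i < mu_i of the
   containment therefore kills every term. *)

Lemma qpinf1 (R : realType) (p : R[i]) : qpinf 1 p = 0.
Proof.
rewrite /qpinf; apply: (@lim_near_cst ((R[i])^o)) => //.
near=> N.
have N_gt0 : (0 < N)%N by near: N; exists 1%N.
by rewrite (bigD1 (Ordinal N_gt0)) //= expr0 mulr1 subrr mul0r.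
Unshelve. all: end_near.
Qed.

Lemma Eth1 (R : realType) (p : R[i]) : Eth p 1 = 0.
Proof. by rewrite /Eth qpinf1 mul0r. Qed.

Lemma sf_eq0 (R : realType) (p q a : R[i]) (m k : nat) :
  (k < m)%N -> a * q ^+ k = 1 -> sf p q a m%:Z = 0.
Proof.
by move=> lt_km aqk; rewrite /sf (bigD1 (Ordinal lt_km)) //= aqk Eth1 mul0r.
Qed.

Lemma pf_eq0 (R : realType) (n : nat) (p q t a : R[i]) (lam : nat -> nat) (k : nat) :
  (0 < n)%N -> (k < lam 1)%N -> a * q ^+ k = 1 -> pf n p q t a lam = 0.
Proof.
move=> n_gt0 lt_k_lam aqk.
by rewrite /pf big_ltn ?ltnS // subrr expr0z mulr1 (sf_eq0 _ lt_k_lam aqk) mul0r.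
Qed.

Lemma W1_eq0 (R : realType) (n : nat) (p q t a b x : R[i]) (lam mu : nat -> nat)
    (k : nat) :
  (0 < n)%N -> (k < lam 1)%N -> x^-1 * q ^+ k = 1 -> W1 n p q t a b x lam mu = 0.
Proof.
move=> n_gt0 lt_k_lam xqk; rewrite /W1; case: ifP => // _.
have lt_k_ext : (k < ext n lam 1)%N by rewrite /ext n_gt0.
by rewrite (pf_eq0 _ _ n_gt0 lt_k_ext xqk) !mul0r mulr0 mul0r.
Qed.

Lemma interl_le (n : nat) (lam mu : nat -> nat) (i : nat) :
  interl n lam mu -> (i < n)%N -> (lam i.+2 <= mu i.+1)%N.
Proof. by move=> /forallP hint lt_in; case/andP: (hint (Ordinal lt_in)). Qed.

Lemma Wv_cons (R : realType) (n : nat) (p q t a b y : R[i]) (zs : seq R[i])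
    (lam mu : nat -> nat) :
  zs != [::] ->
  Wv n p q t a b (y :: zs) lam mu =
    \sum_(f : {ffun 'I_n -> 'I_(ext n lam 1).+1} | interl n (ext n lam) (nu_of f))
      W1 n p q t (a * t ^+ (2 * size zs)) (b * t ^+ size zs) (y * t ^- size zs)
         lam (nu_of f)
      * Wv n p q t a b zs (nu_of f) mu.
Proof. by case: zs. Qed.

Section VanishingAtQlamTdelta.

Variables (R : realType) (n : nat) (p q t : R[i]) (lam : nat -> nat).
Hypotheses (q_neq0 : q != 0) (t_neq0 : t != 0).

Lemma qlam_t_inv_shift (s l : nat) :
  (s + l = n)%N -> (q ^+ lam s * t ^+ (n - s) * t ^- l)^-1 * q ^+ lam s = 1.
Proof.
move=> sl_n; have -> : (n - s = l)%N by lia.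
by rewrite mulfK ?expf_neq0 // mulVf // expf_neq0.
Qed.

Lemma Wv_qlam_t_iota_eq0 (k s : nat) (a b : R[i]) (nu mu : nat -> nat) :
  (s + k = n.+1)%N -> (0 < s)%N ->
  (exists2 i, (i < k)%N & (lam (s + i) < nu i.+1)%N) ->
  Wv n p q t a b [seq q ^+ lam i * t ^+ (n - i) | i <- iota s k] nu mu = 0.
Proof.
elim: k s a b nu => [|k IHk] s a b nu sk_n s_gt0 [i lt_ik lt_lam_nu]; first by [].
have n_gt0 : (0 < n)%N by lia.
case: k IHk sk_n lt_ik => [|k] IHk sk_n lt_ik.
  have i0 : i = 0%N by lia.
  move: lt_lam_nu; rewrite i0 addn0 => lt_lam_nu.
  apply: (W1_eq0 _ _ _ _ _ n_gt0 lt_lam_nu).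
  have -> : (n - s = 0)%N by lia.
  by rewrite expr0 mulr1 mulVf // expf_neq0.
rewrite (_ : iota s k.+2 = s :: iota s.+1 k.+1) // map_cons Wv_cons //.
rewrite size_map size_iota; apply: big1 => f hint.
case: i lt_ik lt_lam_nu => [|i] lt_ik lt_lam_nu.
  rewrite addn0 in lt_lam_nu.
  by rewrite (W1_eq0 _ _ _ _ _ n_gt0 lt_lam_nu) ?mul0r // qlam_t_inv_shift //; lia.
rewrite (IHk s.+1) ?mulr0 //; [lia|].
exists i; first by [].
have lt_in : (i < n)%N by lia.
have ext_nu : ext n nu i.+2 = nu i.+2 by rewrite /ext; case: ifP => //; lia.
rewrite addSnnS; apply: leq_trans lt_lam_nu _.
by rewrite -ext_nu; apply: interl_le hint lt_in.
Qed.

End VanishingAtQlamTdelta.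

Theorem mainTheorem13 (R : realType) (n : nat) (p q t a b r x : R[i])
    (lam mu : nat -> nat) :
  `|p| < 1 -> q != 0 -> t != 0 -> a != 0 -> b != 0 -> r != 0 ->
  is_partition n lam -> is_partition n mu ->
  ~ (forall i, (1 <= i <= n)%N -> (mu i <= lam i)%N) ->
  omega n p q t x r a b lam mu = 0.
Proof.
move=> _ q_neq0 t_neq0 _ _ _ _ _ not_sub.
have [i /andP[/andP[i_gt0 le_in] lt_lam_mu]] :
    exists i, [&& (1 <= i <= n)%N & (lam i < mu i)%N].
  apply: contra_notP not_sub => /forallNP none i /andP[i_gt0 le_in].
  by rewrite leqNgt; apply/negP => lt_lam_mu; apply: (none i); rewrite i_gt0 le_in.
rewrite /omega /qlam_tdelta (@Wv_qlam_t_iota_eq0 R n p q t lam q_neq0 t_neq0 n 1) ?mulr0 //.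
exists i.-1; first lia.
by rewrite add1n prednK.
Qed.
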